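(* For every caterpillar $T$, \[U_T(x_1=0,x_2,x_3,\ldots)=U^L_T(x_1=0,x_2,x_3,\ldots).\] Furthermore, if $T$ is proper, then $U^L_T(\mathbf{x})$ does not depend on $x_1$; in particular, in that case $U^L_T$ is an evaluation of the $U$-polynomial of $T$ (namely $U^L_T(\mathbf{x})=U_T(0,x_2,x_3,\ldots)$).
   Context: Let $\mathbf{x}=x_1,x_2,\ldots$ be commuting indeterminates; for a partition $\lambda=\lambda_1\lambda_2\cdots\lambda_l$ put $\mathbf{x}_\lambda=x_{\lambda_1}\cdots x_{\lambda_l}$. For a tree $T=(V,E)$ and $A\subseteq E$, let $T|_A$ be the spanning subgraph $(V,A)$ and $\lambda(A)$ the partition of $|V|$ formed by the sizes of the connected components of $T|_A$. The $U$-polynomial of the tree $T$ is $U_T(\mathbf{x})=\sum_{A\subseteq E}\mathbf{x}_{\lambda(A)}$. A caterpillar is a tree in which the subgraph induced by the internal (non-leaf) vertices is a non-trivial path, the spine; $P(T)$ denotes the set of spine edges and $L(T)=E\setminus P(T)$ the set of leaf-edges. A caterpillar is proper if every internal vertex is adjacent to at least one leaf. The restricted weighted polynomial is $U^L_T(\mathbf{x})=\sum_{A\subseteq E,\ L(T)\subseteq A}\mathbf{x}_{\lambda(A)}$. *)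

From mathcomp Require Import all_boot all_order all_algebra.
Set Implicit Arguments. Unset Strict Implicit. Unset Printing Implicit Defensive.
Import GRing.Theory.
Local Open Scope ring_scope.

Section Graphs.
Variable V : finType.

(* A simple graph on the vertex set V is given by its edge set
   E : {set {set V}}, each edge being a 2-element subset of V. *)
Definition simple_edges (E : {set {set V}}) : Prop :=
  forall e, e \in E -> #|e| = 2%N.

Definition adj (A : {set {set V}}) : rel V := fun x y => [set x; y] \in A.

Definition connected_graph (E : {set {set V}}) : Prop :=
  forall x y : V, connect (adj E) x y.

Definition acyclic (E : {set {set V}}) : Prop :=
  forall s : seq V, uniq s -> (3 <= size s)%N -> ~~ cycle (adj E) s.

Definition is_tree (E : {set {set V}}) : Prop :=
  simple_edges E /\ connected_graph E /\ acyclic E.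

Definition degree (E : {set {set V}}) (v : V) : nat := #|[set e in E | v \in e]|.
Definition is_leaf (E : {set {set V}}) (v : V) : bool := degree E v == 1%N.
Definition is_internal (E : {set {set V}}) (v : V) : bool := (1 < degree E v)%N.

Definition spine_edges (E : {set {set V}}) : {set {set V}} :=
  [set e in E | [forall v in e, is_internal E v]].
Definition leaf_edges (E : {set {set V}}) : {set {set V}} := E :\: spine_edges E.

(* the subgraph induced by the internal vertices is a non-trivial path:
   its vertices can be listed without repetition as s_0,...,s_k, k >= 1,
   and its edges are exactly the {s_i, s_(i+1)}. *)
Definition is_caterpillar (E : {set {set V}}) : Prop :=
  is_tree E /\
  exists s : seq V,
    [/\ uniq s, (2 <= size s)%N, (forall v, (v \in s) = is_internal E v) &
        spine_edges E = [set [set p.1; p.2] | p in zip s (behead s)]].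

Definition is_proper_caterpillar (E : {set {set V}}) : Prop :=
  is_caterpillar E /\
  forall v, is_internal E v -> exists u, is_leaf E u && ([set u; v] \in E).

Definition components (A : {set {set V}}) : {set {set V}} :=
  [set [set y | connect (adj A) x y] | x : V].

Definition xlam (R : comNzRingType) (x : nat -> R) (A : {set {set V}}) : R :=
  \prod_(C in components A) x #|C|.

Definition Upoly (R : comNzRingType) (E : {set {set V}}) (x : nat -> R) : R :=
  \sum_(A : {set {set V}} | A \subset E) xlam x A.

Definition ULpoly (R : comNzRingType) (E : {set {set V}}) (x : nat -> R) : R :=
  \sum_(A : {set {set V}} | (A \subset E) && (leaf_edges E \subset A)) xlam x A.

End Graphs.

Definition kill1 (R : comNzRingType) (x : nat -> R) : nat -> R :=
  fun i => if i == 1%N then 0 else x i.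

(* If a leaf edge is missing from A, its leaf is an isolated vertex of (V, A),
   so x_(lambda(A)) carries the factor x_1; this gives the first identity for
   any graph.  In a proper caterpillar every vertex lies on a leaf edge (a leaf
   on its own edge, an internal vertex on the edge to one of its leaves), so
   when A contains all leaf edges no component of (V, A) is a singleton and
   x_(lambda(A)) does not involve x_1. *)
From mathcomp Require Import all_boot all_order all_algebra.
Set Implicit Arguments. Unset Strict Implicit.
Import GRing.Theory.
Local Open Scope ring_scope.

Section Caterpillars.
Variable V : finType.
Implicit Types (E A : {set {set V}}) (e : {set V}) (v w : V).

Lemma degree_gt0 E e v : e \in E -> v \in e -> (0 < degree E v)%N.
Proof.
by move=> eE ve; rewrite card_gt0; apply/set0Pn; exists e; rewrite inE eE ve.
Qed.

Lemma degree_gt0P E v : reflect (exists2 e, e \in E & v \in e) (0 < degree E v)%N.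
Proof.
apply: (iffP idP) => [|[e eE ve]]; last exact: degree_gt0 eE ve.
by rewrite card_gt0 => /set0Pn [e]; rewrite inE => /andP [eE ve]; exists e.
Qed.

Lemma noninternal_edge_unique E e f v : ~~ is_internal E v ->
  e \in E -> v \in e -> f \in E -> v \in f -> f = e.
Proof.
move=> nv eE ve fE vf.
have : degree E v == 1%N.
  by rewrite eqn_leq leqNgt nv (degree_gt0 eE ve).
move=> /cards1P [z Ez].
have : e \in [set e in E | v \in e] by rewrite inE eE ve.
have : f \in [set e in E | v \in e] by rewrite inE fE vf.
by rewrite Ez !inE => /eqP -> /eqP ->.
Qed.

Lemma noninternal_leaf_edge E e v : ~~ is_internal E v ->
  e \in E -> v \in e -> e \in leaf_edges E.
Proof.
move=> nv eE ve; rewrite !inE eE andbT /=.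
by apply: contra nv => /forall_inP; apply.
Qed.

Lemma isolated_component A v :
  (forall w, ~~ adj A v w) -> [set v] \in components A.
Proof.
move=> isov; apply/imsetP; exists v => //; apply/setP => w; rewrite !inE.
apply/eqP/idP => [-> | /connectP [[|u p] /= vp ->] //]; first exact: connect0.
by rewrite (negbTE (isov u)) in vp.
Qed.

Lemma xlam_kill1_singleton (R : comNzRingType) (x : nat -> R) A v :
  [set v] \in components A -> xlam (kill1 x) A = 0.
Proof. by move=> Av; rewrite /xlam (bigD1 [set v]) //= cards1 mul0r. Qed.

Lemma xlam_kill1_missing_leaf_edge (R : comNzRingType) (x : nat -> R) E A :
  A \subset E -> ~~ (leaf_edges E \subset A) -> xlam (kill1 x) A = 0.
Proof.
move=> AE /subsetPn [e]; rewrite !inE => /andP [+ eE] eA.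
rewrite eE /= => /forall_inPn [v ve nv].
apply: (@xlam_kill1_singleton _ _ _ v); apply: isolated_component => w.
apply: contra eA => Avw.
have vwE : [set v; w] \in E := subsetP AE _ Avw.
by rewrite -(noninternal_edge_unique nv eE ve vwE (set21 v w)).
Qed.

Lemma Upoly_kill1 (R : comNzRingType) (x : nat -> R) E :
  Upoly E (kill1 x) = ULpoly E (kill1 x).
Proof.
rewrite /Upoly /ULpoly (bigID (fun A => leaf_edges E \subset A)) /=.
rewrite [X in _ + X]big1 ?addr0 // => A /andP [AE LA].
exact: (xlam_kill1_missing_leaf_edge x AE LA).
Qed.

Lemma components_card_neq1 A C :
  (forall v, exists2 w, w != v & adj A v w) ->
  C \in components A -> #|C| != 1%N.
Proof.
move=> nbr /imsetP [v _ ->]; have [w wv Avw] := nbr v.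
have : [set v; w] \subset [set y | connect (adj A) v y].
  apply/subsetP => u; rewrite !inE => /orP [] /eqP ->.
    exact: connect0.
  exact: connect1.
by move/subset_leq_card; rewrite cards2 eq_sym wv; case: #|_| => [|[|]].
Qed.

Lemma eq_xlam_off1 (R : comNzRingType) (x y : nat -> R) A :
  (forall v, exists2 w, w != v & adj A v w) ->
  (forall i, i != 1%N -> x i = y i) -> xlam x A = xlam y A.
Proof.
by move=> nbr xy; apply: eq_bigr => C AC; apply/xy/(components_card_neq1 nbr).
Qed.

Lemma connected_degree_gt0 E v w :
  connected_graph E -> (0 < degree E w)%N -> (0 < degree E v)%N.
Proof.
move=> conn wpos; case/connectP: (conn v w) => [[|u p] /= vp wE].
  by rewrite wE in wpos.
by case/andP: vp => Evu _; apply: degree_gt0 Evu (set21 v u).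
Qed.

Lemma caterpillar_degree_gt0 E v : is_caterpillar E -> (0 < degree E v)%N.
Proof.
move=> [[_ [conn _]] [[|a s] [_ // _ ins _]]].
apply: (connected_degree_gt0 v conn (ltnW (_ : is_internal E a))).
by rewrite -ins mem_head.
Qed.

Lemma proper_caterpillar_leaf_edge E v :
  is_proper_caterpillar E -> exists2 e, e \in leaf_edges E & v \in e.
Proof.
move=> [cat proper]; have [vint | nv] := boolP (is_internal E v).
  have [u /andP [/eqP u_leaf uvE]] := proper v vint.
  exists [set u; v]; last exact: set22.
  by apply: noninternal_leaf_edge uvE (set21 u v); rewrite /is_internal u_leaf.
have /degree_gt0P [e eE ve] := caterpillar_degree_gt0 v cat.
by exists e => //; apply: noninternal_leaf_edge eE ve.
Qed.

Lemma edge_other_end E e v : simple_edges E -> e \in E -> v \in e ->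
  exists2 w, w != v & e = [set v; w].
Proof.
move=> se eE; have /eqP /cards2P [a [b [ab ->]]] := se e eE.
rewrite !inE => /orP [] /eqP ->; first by exists b; rewrite // eq_sym.
by exists a; rewrite // setUC.
Qed.

Lemma proper_caterpillar_neighbour E A : is_proper_caterpillar E ->
  leaf_edges E \subset A -> forall v, exists2 w, w != v & adj A v w.
Proof.
move=> pcat LA v; have [e eL ve] := proper_caterpillar_leaf_edge v pcat.
have [[[se _] _] _] := pcat.
have eE : e \in E by case/setDP: eL.
have [w wv def_e] := edge_other_end se eE ve.
by exists w; rewrite // /adj -def_e (subsetP LA).
Qed.

Lemma ULpoly_off1 E (R : comNzRingType) (x y : nat -> R) :
  is_proper_caterpillar E -> (forall i, i != 1%N -> x i = y i) ->
  ULpoly E x = ULpoly E y.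
Proof.
move=> pcat xy; apply: eq_bigr => A /andP [_ LA].
exact: eq_xlam_off1 (proper_caterpillar_neighbour pcat LA) xy.
Qed.

End Caterpillars.

Theorem proposition2p1 (V : finType) (E : {set {set V}}) :
  is_caterpillar E ->
  (forall (R : comNzRingType) (x : nat -> R),
      Upoly E (kill1 x) = ULpoly E (kill1 x)) /\
  (is_proper_caterpillar E ->
     (forall (R : comNzRingType) (x y : nat -> R),
        (forall i, i != 1%N -> x i = y i) -> ULpoly E x = ULpoly E y) /\
     (forall (R : comNzRingType) (x : nat -> R),
        ULpoly E x = Upoly E (kill1 x))).
Proof.
move=> _; split=> [R x | pcat]; first exact: Upoly_kill1.
split=> [R x y | R x]; first exact: ULpoly_off1.
rewrite Upoly_kill1; apply: ULpoly_off1 => // i /negPf i1.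
by rewrite /kill1 i1.
Qed.
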